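(* Let $G'(L'\cup R',E')$ be a bipartite graph with $|L'|=|R'|=N$ in which every vertex has degree at least $2N/3$. Then for any edge $e\in E'$, the probability that $e$ belongs to a perfect matching of $G'$ chosen uniformly at random is at most $3/N$. *)

From HB Require Import structures.
From mathcomp Require Import all_boot all_order all_algebra all_fingroup.
Set Implicit Arguments. Unset Strict Implicit. Unset Printing Implicit Defensive.
Import GRing.Theory Num.Theory.

(* A bipartite graph G'(L' ∪ R', E') with |L'| = |R'| = N is encoded by
   labelling both sides by 'I_N; adj i j (i in L', j in R') means the edge
   {i, j} is in E'. *)

Definition ldeg N (adj : 'I_N -> 'I_N -> bool) (i : 'I_N) : nat :=
  #|[set j | adj i j]|.
Definition rdeg N (adj : 'I_N -> 'I_N -> bool) (j : 'I_N) : nat :=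
  #|[set i | adj i j]|.

Definition perfect_matching N (adj : 'I_N -> 'I_N -> bool) (s : 'S_N) : bool :=
  [forall i, adj i (s i)].

Definition perfect_matchings N (adj : 'I_N -> 'I_N -> bool) : {set 'S_N} :=
  [set s | perfect_matching adj s].

Definition pm_edge_prob N (adj : 'I_N -> 'I_N -> bool) (i j : 'I_N) : rat :=
  (#|[set s in perfect_matchings adj | s i == j]|%:R
     / #|perfect_matchings adj|%:R)%R.

From HB Require Import structures.
From mathcomp Require Import all_boot all_order all_algebra all_fingroup.
From mathcomp Require Import zify.
Import GRing.Theory Num.Theory.
Set Implicit Arguments.
Unset Strict Implicit.
Local Open Scope ring_scope.

(* Switching argument.  Given a perfect matching s containing the edge (i, j),
   every left vertex k with i ~ s k and k ~ j yields a new perfect matching by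
   exchanging the partners of i and k; by the degree hypothesis there are at
   least N/3 such k.  Distinct pairs (s, k) give distinct matchings, because k
   is recovered as the new partner of j.  Hence N/3 * #(matchings through
   (i, j)) <= #(all matchings). *)

Lemma two_thirds_le_natr (R : numFieldType) (N x : nat) :
  2 * N%:R / 3 <= x%:R :> R -> (2 * N <= 3 * x)%N.
Proof.
by rewrite ler_pdivrMr ?ltr0n // -natrM -[3 : R]/(3%:R) -natrM ler_nat (mulnC x).
Qed.

Lemma ratio_le_natr (R : numFieldType) (a b c n : nat) :
  (0 < n)%N -> (a * n <= c * b)%N -> a%:R / b%:R <= c%:R / n%:R :> R.
Proof.
move=> n_gt0 le_an_cb; have [->|b_gt0] := posnP b.
  by rewrite invr0 mulr0 divr_ge0.
by rewrite ler_pdivrMr ?ltr0n // mulrAC ler_pdivlMr ?ltr0n // -!natrM ler_nat.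
Qed.

Lemma leq_addcards_setI (T : finType) (A B : {set T}) :
  (#|A| + #|B| <= #|T| + #|A :&: B|)%N.
Proof. by rewrite -cardsUI leq_add2r max_card. Qed.

Section Switching.

Variables (N : nat) (adj : 'I_N -> 'I_N -> bool) (i j : 'I_N).

Definition switch_set (s : 'S_N) : {set 'I_N} :=
  [set k | adj i (s k) && adj k j].

Definition switch (k : 'I_N) (s : 'S_N) : 'S_N := (tperm i k * s)%g.

Lemma ldeg_perm (s : 'S_N) : #|[set k | adj i (s k)]| = ldeg adj i.
Proof.
rewrite /ldeg -(card_preimset [set l | adj i l] (@perm_inj _ s)).
by apply: eq_card => k; rewrite !inE.
Qed.

Lemma degD_leq_card_switch_set (s : 'S_N) :
  (ldeg adj i + rdeg adj j <= N + #|switch_set s|)%N.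
Proof.
have -> : switch_set s = [set k | adj i (s k)] :&: [set k | adj k j].
  by apply/setP => k; rewrite !inE.
by rewrite -(ldeg_perm s) -[X in (_ <= X + _)%N]card_ord leq_addcards_setI.
Qed.

Lemma switch_perfect (s : 'S_N) (k : 'I_N) :
  perfect_matching adj s -> s i = j -> k \in switch_set s ->
  perfect_matching adj (switch k s).
Proof.
move=> /forallP s_pm sij; rewrite inE => /andP [adj_i_sk adj_kj].
apply/forallP => x; rewrite /switch permM.
by case: tpermP => [->|->|_ _] //; rewrite sij.
Qed.

Lemma switch_inj (s s' : 'S_N) (k k' : 'I_N) :
  s i = j -> s' i = j -> switch k s = switch k' s' -> (s, k) = (s', k').
Proof.
move=> sij s'ij eq_sw.
have switch_j l (t : 'S_N) : t i = j -> switch l t l = j by move=> tij; rewrite permM tpermR.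
have ekk' : k = k'.
  by apply: (@perm_inj _ (switch k' s')); rewrite switch_j // -eq_sw switch_j.
by move: eq_sw; rewrite /switch ekk' => /mulgI ->.
Qed.

Lemma sum_card_switch_set_leq :
  (\sum_(s in [set s in perfect_matchings adj | s i == j]) #|switch_set s|
     <= #|perfect_matchings adj|)%N.
Proof.
set Pe := [set s in _ | _].
pose D := [set p : 'S_N * 'I_N | (p.1 \in Pe) && (p.2 \in switch_set p.1)].
have -> : (\sum_(s in Pe) #|switch_set s|)%N = #|D|.
  rewrite -sum1_card (eq_bigr (fun s => \sum_(k in switch_set s) 1)%N).
    by rewrite pair_big_dep; apply: eq_bigl => p; rewrite /D inE.
  by move=> s _; rewrite sum1_card.
have D_edge p : p \in D -> p.1 i = j /\ perfect_matching adj p.1.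
  by rewrite !inE => /andP [/andP [? /eqP ?] _].
have switch_inj_D : {in D &, injective (fun p => switch p.2 p.1)}.
  move=> [s k] [s' k'] /D_edge [sij _] /D_edge [s'ij _].
  exact: switch_inj.
rewrite -(card_in_imset switch_inj_D); apply: subset_leq_card.
apply/subsetP => _ /imsetP [[s k] pD ->]; rewrite inE.
move: (pD) => /D_edge [sij s_pm]; rewrite inE in pD.
by apply: switch_perfect => //; case/andP: pD.
Qed.

End Switching.

Theorem mainTheorem13 (N : nat) (adj : 'I_N -> 'I_N -> bool)
  (hL : forall i : 'I_N, (2 * N%:R / 3 <= (ldeg adj i)%:R :> rat)%R)
  (hR : forall j : 'I_N, (2 * N%:R / 3 <= (rdeg adj j)%:R :> rat)%R)
  (i j : 'I_N) (he : adj i j) :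
  (pm_edge_prob adj i j <= 3 / N%:R)%R.
Proof.
have N_gt0 : (0 < N)%N := leq_ltn_trans (leq0n i) (ltn_ord i).
have third_le_switch s : (N <= 3 * #|switch_set adj i j s|)%N.
  have := degD_leq_card_switch_set adj i j s.
  have := two_thirds_le_natr (hL i); have := two_thirds_le_natr (hR j); lia.
apply: ratio_le_natr => //.
apply: leq_trans (leq_mul (leqnn 3) (sum_card_switch_set_leq adj i j)).
rewrite big_distrr -sum1_card big_distrl /=.
by apply: leq_sum => s _; rewrite mul1n.
Qed.
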